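(* Let $n\ge 2$ and let $G$ be a complete $n$-partite graph whose vertex set is partitioned into partite sets $V_1,\dots,V_n$ with $a_i=|V_i|\ge 1$ for each $i$. Then $$\tau(G)=\frac12\left[\left(\sum_{i=1}^n a_i\right)^2-\sum_{i=1}^n a_i^2\right],$$ and for $v\in V_j$, $TDV(v)=\left(\sum_{i=1}^n a_i\right)-a_j$.
   Context: A set $D \subseteq V(G)$ is a total dominating set of $G$ if every vertex of $G$ has a neighbor in $D$. $\gamma_t(G)$ is the minimum cardinality of a total dominating set; a minimum one is a $\gamma_t(G)$-set. $\tau(G)$ is the number of $\gamma_t(G)$-sets and $TDV(v)$ is the number of $\gamma_t(G)$-sets containing $v$. *)

From mathcomp Require Import all_boot all_order all_algebra.
Set Implicit Arguments. Unset Strict Implicit. Unset Printing Implicit Defensive.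

Definition is_tds (T : finType) (g : rel T) (D : {set T}) : bool :=
  [forall v, [exists u in D, g v u]].

(* gamma_t(G): minimum cardinality of a total dominating set
   (the default #|T| is only used when no TDS exists). *)
Definition gamma_t (T : finType) (g : rel T) : nat :=
  \big[minn/#|T|]_(D : {set T} | is_tds g D) #|D|.

Definition gt_sets (T : finType) (g : rel T) : {set {set T}} :=
  [set D : {set T} | is_tds g D & #|D| == gamma_t g].

Definition tau (T : finType) (g : rel T) : nat := #|gt_sets g|.

Definition TDV (T : finType) (g : rel T) (v : T) : nat :=
  #|[set D in gt_sets g | v \in D]|.

(* Complete n-partite graph with partite sets V_i = p^{-1}(i). *)
Definition complete_multipartite (T : finType) (n : nat) (p : T -> 'I_n) : rel T :=
  fun x y => p x != p y.

Definition part (T : finType) (n : nat) (p : T -> 'I_n) (i : 'I_n) : {set T} :=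
  [set v | p v == i].

From mathcomp Require Import all_boot all_order all_algebra.

Set Implicit Arguments.
Unset Strict Implicit.
Unset Printing Implicit Defensive.

Import Order.TTheory GRing.Theory.
Local Open Scope ring_scope.

(* Two vertices in different parts totally dominate a complete multipartite
   graph, and no single vertex does, so gamma_t = 2 and the gamma_t-sets are
   exactly the pairs {v, y} with y outside the part of v.  Hence TDV(v) is the
   number of vertices outside the part of v, and counting incidences between
   vertices and gamma_t-sets gives
   2 tau = sum_i a_i (S - a_i) = S^2 - sum_i a_i^2, where S = sum_i a_i. *)

Section TotalDomination.
Variables (T : finType) (g : rel T).

Lemma gamma_tE (D0 : {set T}) :
  is_tds g D0 -> (forall D, is_tds g D -> (#|D0| <= #|D|)%N) ->
  gamma_t g = #|D0|.
Proof.
move=> tdsD0 minD0; rewrite /gamma_t -minEnat; apply/eqP; rewrite eq_le.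
by rewrite bigmin_le_cond //= le_bigmin //= leEnat max_card.
Qed.

Lemma card_gt_sets D : D \in gt_sets g -> #|D| = gamma_t g.
Proof. by rewrite inE => /andP[_ /eqP]. Qed.

Lemma sum_TDV : (\sum_v TDV g v = gamma_t g * tau g)%N.
Proof.
have incidences v : TDV g v = (\sum_(D in gt_sets g) (v \in D))%N.
  rewrite /TDV -sum1_card big_mkcond [RHS]big_mkcond /=; apply: eq_bigr => D _.
  by rewrite inE; case: (D \in gt_sets g); case: (v \in D).
under eq_bigr => v _ do rewrite incidences.
rewrite exchange_big /tau mulnC -sum_nat_const /=; apply: eq_bigr => D /card_gt_sets <-.
by rewrite -sum1_card [RHS]big_mkcond.
Qed.

Lemma tds_card_ge2 (v : T) D : irreflexive g -> is_tds g D -> (2 <= #|D|)%N.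
Proof.
move=> g_irr /forallP tdsD.
have /existsP[u /andP[uD _]] := tdsD v.
have /existsP[w /andP[wD guw]] := tdsD u.
have uw : u != w by apply: contraTneq guw => <-; rewrite g_irr.
have <- : #|[set u; w]| = 2%N by rewrite cards2 uw.
apply: subset_leq_card.
by apply/subsetP => x; rewrite !inE => /orP[] /eqP ->.
Qed.

End TotalDomination.

Section CompleteMultipartite.
Variables (T : finType) (n : nat) (p : T -> 'I_n).
Local Notation G := (complete_multipartite p).

Lemma complete_multipartite_irr : irreflexive G.
Proof. by move=> x; rewrite /complete_multipartite eqxx. Qed.

Lemma is_tds_pair x y : p x != p y -> is_tds G [set x; y].
Proof.
move=> pxy; apply/forallP => v; apply/existsP.
have [pvx|pvx] := eqVneq (p v) (p x).
  by exists y; rewrite !inE eqxx orbT /complete_multipartite pvx.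
by exists x; rewrite !inE eqxx.
Qed.

Lemma card_part_sum : #|T| = (\sum_i #|part p i|)%N.
Proof.
rewrite -sum1_card (partition_big p predT) //=; apply: eq_bigr => i _.
by rewrite -sum1_card; apply: eq_bigl => v; rewrite inE.
Qed.

Lemma sum_by_part (F : 'I_n -> nat) :
  (\sum_v F (p v) = \sum_i #|part p i| * F i)%N.
Proof.
rewrite (partition_big p predT) //=; apply: eq_bigr => i _.
rewrite -sum_nat_const; apply: congr_big => // [v|v /eqP <-//].
by rewrite inE.
Qed.

Variables (x0 y0 : T).
Hypothesis px0y0 : p x0 != p y0.

Lemma gamma_t_complete_multipartite : gamma_t G = 2%N.
Proof.
have x0y0 : x0 != y0 by apply: contraNneq px0y0 => ->.
rewrite (@gamma_tE _ _ [set x0; y0]) ?cards2 ?x0y0 ?is_tds_pair // => D.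
exact/tds_card_ge2/complete_multipartite_irr.
Qed.

Lemma gt_sets_containing v :
  [set D in gt_sets G | v \in D] = [set [set v; y] | y in ~: part p (p v)].
Proof.
have neq_of_part y : y \in ~: part p (p v) -> v != y.
  by rewrite !inE; apply: contraNneq => <-.
apply/setP => D; rewrite !inE gamma_t_complete_multipartite.
apply/idP/imsetP => [/andP[/andP[/forallP tdsD /eqP cardD] vD] | [y yP ->]].
  have /existsP[w /andP[wD pvw]] := tdsD v.
  have wP : w \in ~: part p (p v) by rewrite !inE eq_sym.
  exists w => //; apply/esym/eqP; rewrite eqEcard cardD cards2 neq_of_part //.
  by rewrite leqnn andbT; apply/subsetP => z; rewrite !inE => /orP[] /eqP ->.
rewrite is_tds_pair; last by move: yP; rewrite !inE eq_sym.
by rewrite cards2 neq_of_part // !inE eqxx.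
Qed.

Lemma TDV_complete_multipartite v : TDV G v = #|~: part p (p v)|.
Proof.
rewrite /TDV gt_sets_containing card_in_imset // => y z _ _ vyz.
have : z \in [set v; y] by rewrite vyz !inE eqxx orbT.
rewrite !inE => /orP[/eqP zv|/eqP -> //].
have : y \in [set v; z] by rewrite -vyz !inE eqxx orbT.
by rewrite zv !inE orbb => /eqP.
Qed.

End CompleteMultipartite.

Lemma sum_mul_sub_sum (R : pzRingType) (I : finType) (a : I -> nat) :
  (\sum_i a i * (\sum_k a k - a i))%N%:R =
    (\sum_i a i)%N%:R ^+ 2 - \sum_i (a i)%:R ^+ 2 :> R.
Proof.
rewrite natr_sum expr2 [in X in X * _]natr_sum mulr_suml -sumrB.
apply: eq_bigr => i _; rewrite natrM natrB ?mulrBr ?expr2 //.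
by rewrite (bigD1 i) //= leq_addr.
Qed.

Theorem proposition3p1 (T : finType) (n : nat) (p : T -> 'I_n)
  (hn : (2 <= n)%N) (ha : forall i : 'I_n, (0 < #|part p i|)%N) :
  let a := fun i : 'I_n => #|part p i| in
  let G := complete_multipartite p in
  ((tau G)%:R : rat) =
     2^-1 * (((\sum_(i < n) a i)%N)%:R ^+ 2 - \sum_(i < n) ((a i)%:R ^+ 2))
  /\ (forall (j : 'I_n) (v : T), v \in part p j ->
        TDV G v = ((\sum_(i < n) a i) - a j)%N).
Proof.
move=> a G.
have [x0 [y0 px0y0]] : exists x0 y0, p x0 != p y0.
  have /card_gt0P[x0] := ha (Ordinal (ltnW hn)).
  have /card_gt0P[y0] := ha (Ordinal hn).
  by rewrite !inE => /eqP px0 /eqP py0; exists x0, y0; rewrite px0 py0.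
have TDVE v : TDV G v = (\sum_i a i - a (p v))%N.
  by rewrite (TDV_complete_multipartite px0y0) -card_part_sum
             -(cardsC (part p (p v))) addKn.
split=> [|j v]; last by rewrite inE => /eqP <-.
have twice_tau : (2 * tau G = \sum_i a i * (\sum_k a k - a i))%N.
  rewrite -(gamma_t_complete_multipartite px0y0) -(sum_TDV G).
  rewrite (eq_bigr _ (fun v _ => TDVE v)).
  exact: (sum_by_part p (fun i => \sum_k a k - a i)%N).
by rewrite -(sum_mul_sub_sum _ a) -twice_tau natrM mulrA mulVf ?mul1r.
Qed.
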